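(* Let $x\in\mathbb X$ and $N\Subset\mathbb X\setminus\{x\}$. Then \[ |\gamma(x,N)|\,\alpha^N\le\sum_{\substack{\mathcal X\subset\mathbf F(x):\\ \left(\bigcup_{X\in\mathcal X}X\right)\setminus\{x\}=N}}\ \prod_{X\in\mathcal X}\Big(\max\Big\{|W(X)|,\ 1+|W(X)-1|\alpha^S\ \Big|\ \varnothing\neq S\subset X\setminus\{x\}\Big\}-1\Big). \]
   Context: $\mathbb X$ is a finite or countably infinite set, $X\Subset\mathbb X$ means finite subset, $\mathbf F$ is the set of finite subsets, $\mathbf F(x)=\{X\Subset\mathbb X\mid x\in X\}$. Fix $W:\mathbf F\to\mathbb C$, $r:\mathbb X\to[0,1)$, $\alpha=\frac r{1-r}$, $\alpha^S=\prod_{s\in S}\alpha(s)$. Boltzmann factor conditioned on $B$: with $W(X\mid B)=\prod_{C\subset B}W(X\cup C)$ if $X\cap B=\varnothing$, $0$ if $X=\{y\}$ with $y\in B$, $1$ otherwise, set $\kappa(X\mid B)=\prod_{\varnothing\neq S\subset X}W(S\mid B)$ and $\kappa(x\mid B)=\kappa(\{x\}\mid B)$. Kernel: $\gamma(x,N)=\gamma(x,N\mid\varnothing)$ where $\gamma(x,N\mid B)=\sum_{M\subset N}(-1)^{|N\setminus M|}\kappa(x\mid B\cup M)$. A maximum $\max\{a,\ b_S\mid S\in\mathcal S\}$ denotes the maximum of $a$ and all $b_S$ (equal to $a$ if $\mathcal S=\varnothing$). The empty collection $\mathcal X=\varnothing$ has union $\varnothing$; empty products equal $1$. *)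

From HB Require Import structures.
From mathcomp Require Import all_boot all_order all_algebra.
From mathcomp Require Import finmap.
From mathcomp Require Import complex.
From mathcomp Require Import reals.
Set Implicit Arguments. Unset Strict Implicit. Unset Printing Implicit Defensive.
Import Order.TTheory GRing.Theory Num.Theory.
Local Open Scope ring_scope.
Local Open Scope fset_scope.

(* The ambient set 𝕏 is a countable type T; finite subsets are {fset T};
   complex numbers are R[i] for R : realType. *)

Section Defs.
Variables (R : realType) (T : countType).
Local Notation C := R[i].

Definition Wcond (W : {fset T} -> C) (X B : {fset T}) : C :=
  if X `&` B == fset0 then \prod_(D <- fpowerset B) W (X `|` D)
  else if has (fun y => X == [fset y]) B then 0
  else 1.

Definition kappa (W : {fset T} -> C) (X B : {fset T}) : C :=
  \prod_(S <- fpowerset X | S != fset0) Wcond W S B.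

Definition gammaB (W : {fset T} -> C) (x : T) (N B : {fset T}) : C :=
  \sum_(M <- fpowerset N) ((-1) ^+ #|` N `\` M| * kappa W [fset x] (B `|` M))%R.

Definition gamma (W : {fset T} -> C) (x : T) (N : {fset T}) : C :=
  gammaB W x N fset0.

Definition alpha (r : T -> R) (s : T) : R := (r s / (1 - r s))%R.
Definition alphaS (r : T -> R) (S : {fset T}) : R := \prod_(s <- S) alpha r s.

Definition bound_max (W : {fset T} -> C) (r : T -> R) (x : T) (X : {fset T}) : C :=
  \big[Num.max/`|W X|]_(S <- fpowerset (X `\ x) | S != fset0)
     (1 + `|W X - 1| * (alphaS r S)%:C%C)%R.

(* the right-hand side: sum over collections 𝒳 ⊂ F(x) with (⋃𝒳) \ {x} = N.
   Any such 𝒳 consists of subsets of N ∪ {x}, so it ranges over subsets of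
   fpowerset (x |` N). *)
Definition rhs (W : {fset T} -> C) (r : T -> R) (x : T) (N : {fset T}) : C :=
  \sum_(XX <- fpowerset (fpowerset (x |` N))
         | all (fun X => x \in X) XX && ((\bigcup_(X <- XX) X) `\ x == N))
     \prod_(X <- XX) (bound_max W r x X - 1)%R.

End Defs.

From mathcomp Require Import all_boot all_order all_algebra.
From mathcomp Require Import finmap.
From mathcomp Require Import complex.
From mathcomp Require Import reals.
From mathcomp Require Import ring.
Import Order.TTheory GRing.Theory Num.Theory.
Local Open Scope fset_scope.
Local Open Scope ring_scope.

(* Since x ∉ M, κ(x | M) is the product of W({x} ∪ D) over D ⊆ M, so γ(x, N)
   is an alternating sum over M ⊆ N of the product of W(X) over the sets X ∋ x
   with X \ {x} ⊆ M.  Write W(X) = 1 + (W(X) - 1) and expand the sets X one at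
   a time, keeping track of the part A ⊆ N that the expanded factors W(X) - 1
   already cover.  Both sides of the inequality then obey the same recursion,
   with W(X) - 1 on the left and max{...} - 1 on the right; once all sets are
   expanded, what is left is the alternating sum of [A ⊆ M], which collapses
   to the indicator of A = N.  Induction on the expanded family concludes: if
   X \ {x} ⊆ A, the step multiplies by W(X), and |W(X)| ≤ max; otherwise the
   new points S = (X \ {x}) \ A are paid for by α^S, since
   |W(X) - 1| α^S ≤ max - 1. *)

Section FsetBig.
Variable K : choiceType.
Implicit Types (a : K) (A B N : {fset K}).

Lemma big_fpowersetU1 (R : Type) (idx : R) (op : Monoid.com_law idx) a A
    (F : {fset K} -> R) : a \notin A ->
  \big[op/idx]_(X <- fpowerset (a |` A)) F X =
  op (\big[op/idx]_(X <- fpowerset A) F X)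
     (\big[op/idx]_(X <- fpowerset A) F (a |` X)).
Proof.
move=> aNA; have aNsub Y : Y `<=` A -> a \notin Y.
  by move=> sYA; apply: contraNN aNA; apply: (fsubsetP sYA).
rewrite (big_fsetID op (fun X : {fset K} => a \notin X)) /=; congr (op _ _).
  apply: eq_fbigl => X; rewrite !inE /= !fpowersetE.
  apply/andP/idP => [[sXaA aNX]|sXA]; last first.
    by rewrite aNsub // (fsubset_trans sXA (fsubsetU1 _ _)).
  by rewrite -(mem_fsetD1 aNX) fsubDset.
have -> : [fset X in fpowerset (a |` A) | ~~ (a \notin X)] =
          [fset a |` X | X in fpowerset A].
  apply/fsetP => X; rewrite !inE /= negbK fpowersetE.
  apply/andP/imfsetP => [[sXaA aX]|[Y /=]].
    by exists (X `\ a); rewrite ?fsetD1K // /= fpowersetE fsubDset.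
  by rewrite fpowersetE => sYA ->; rewrite fsetUS // fset1U1.
rewrite big_imfset // => X Y; rewrite /= !fpowersetE => sXA sYA eXY.
by rewrite -(fsetU1K (aNsub X sXA)) eXY fsetU1K // aNsub.
Qed.

Lemma big_fsetD_split [R : Type] [idx : R] (op : Monoid.com_law idx)
    [A B N : {fset K}] (F : K -> R) : A `<=` B -> B `<=` N ->
  \big[op/idx]_(s <- N `\` A) F s =
  op (\big[op/idx]_(s <- N `\` B) F s) (\big[op/idx]_(s <- B `\` A) F s).
Proof.
move=> sAB sBN; rewrite (big_fsetID op (fun s : K => s \notin B)) /=.
congr (op _ _); apply: eq_fbigl => s; rewrite !inE /=.
  by case sB: (s \in B); rewrite /= ?andbF // (contraFN (fsubsetP sAB s) sB) andbT.
by case sB: (s \in B); rewrite /= ?andbF // (fsubsetP sBN s sB) andbT.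
Qed.

Lemma alternating_sum_fsubset (Rg : pzRingType) A N :
  \sum_(M <- fpowerset N) (-1) ^+ #|` N `\` M| * ((A `<=` M)%:R : Rg) =
  (A == N)%:R.
Proof.
elim/fset1U_rect: N A => [|a N aNN IH] A.
  by rewrite fpowerset0 big_seq_fset1 fsetD0 expr0 mul1r fsubset0.
have aNM M : M \in fpowerset N -> a \notin M.
  by rewrite fpowersetE => sMN; apply: contraNN aNN; apply: (fsubsetP sMN).
have card_aND M : M \in fpowerset N -> #|` (a |` N) `\` M| = (#|` N `\` M|).+1.
  move=> MN; have -> : (a |` N) `\` M = a |` (N `\` M).
    by apply/fsetP => y; rewrite !inE; case: eqP => // ->; rewrite (negbTE (aNM M MN)).
  by rewrite cardfsU1 inE (negbTE aNN) andbF.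
have aND M : (a |` N) `\` (a |` M) = N `\` M.
  by apply/fsetP => y; rewrite !inE; case: eqP => //= ->; rewrite (negbTE aNN) andbF.
rewrite big_fpowersetU1 //= big_seq.
under eq_bigr => M MN do rewrite card_aND // exprS mulN1r mulNr.
under [X in _ + X]eq_bigr => M _ do rewrite aND -fsubDset.
rewrite -big_seq sumrN !IH.
have [aA|aNA] := boolP (a \in A).
  have -> : (A == N) = false by apply: contraNF aNN => /eqP <-.
  have -> : (A `\ a == N) = (A == a |` N).
    by apply/eqP/eqP => [<-|->]; [rewrite fsetD1K | rewrite fsetU1K].
  by rewrite mulr0n oppr0 add0r.
rewrite mem_fsetD1 // addNr; case: eqP aNA => // ->.
by rewrite fset1U1.
Qed.

Lemma all_fsetU1 (p : pred K) a A : all p (a |` A) = p a && all p A.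
Proof.
apply/allP/andP => [pA|[pa /allP pA] y /fset1UP[->|/pA] //].
by split; [apply: pA; rewrite fset1U1 | apply/allP => y yA; apply: pA; rewrite fset1Ur].
Qed.

End FsetBig.

Section RealBigmax.
Variables (C : numDomainType) (I : eqType) (x0 : C) (P : pred I) (f : I -> C).
Hypotheses (x0_real : x0 \is Num.real) (f_real : forall i, f i \is Num.real).

Lemma real_bigmax_ge_id (s : seq I) : x0 <= \big[Num.max/x0]_(i <- s | P i) f i.
Proof.
elim: s => [|i s IH]; rewrite ?big_nil ?big_cons //; case: ifP => // _.
by rewrite comparable_le_max ?IH ?orbT // real_comparable // bigmax_real.
Qed.

Lemma real_le_bigmax_seq (s : seq I) i :
  i \in s -> P i -> f i <= \big[Num.max/x0]_(j <- s | P j) f j.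
Proof.
elim: s => [//|j s IH]; rewrite inE big_cons => /orP[/eqP-> Pi|iS Pi].
  by rewrite Pi comparable_le_max ?lexx // real_comparable // bigmax_real.
case: ifP => _; last exact: IH.
by rewrite comparable_le_max ?IH ?orbT // real_comparable // bigmax_real.
Qed.

End RealBigmax.

Arguments real_bigmax_ge_id {C I x0 P f}.
Arguments real_le_bigmax_seq {C I x0 P f}.

Section Expansion.
Variables (C : numDomainType) (T : choiceType) (x : T) (N : {fset T}).
Implicit Types (P : {fset {fset T}}) (A X : {fset T}) (w : {fset T} -> C).

(* The sets of P still carry their factor w X; A is the part of N already
   covered by the expanded factors w X - 1. *)
Definition mobius_sum w P A : C :=
  \sum_(M <- fpowerset N) (-1) ^+ #|` N `\` M| *
    ((A `<=` M)%:R * \prod_(X <- P | (x \in X) && (X `\ x `<=` M)) w X).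

Definition cover_sum w P A : C :=
  \sum_(XX <- fpowerset P | all (fun X => x \in X) XX &&
                           (A `|` (\bigcup_(X <- XX) X) `\ x == N))
    \prod_(X <- XX) (w X - 1).

Lemma mobius_sum_fset0 w A : mobius_sum w fset0 A = (A == N)%:R.
Proof.
rewrite -(alternating_sum_fsubset _ _ A N); apply: eq_bigr => M _.
by rewrite big_mkcond big_seq_fset0 mulr1.
Qed.

Lemma cover_sum_fset0 w A : cover_sum w fset0 A = (A == N)%:R.
Proof.
rewrite /cover_sum fpowerset0 big_mkcond big_seq_fset1 /= !big_seq_fset0.
by rewrite fset0D fsetU0; case: (A == N).
Qed.

Lemma mobius_sum_fsetU1 w X P A : X \notin P ->
  mobius_sum w (X |` P) A =
  mobius_sum w P A + (x \in X)%:R * (w X - 1) * mobius_sum w P (A `|` X `\ x).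
Proof.
move=> XNP; rewrite /mobius_sum mulr_sumr -big_split /=; apply: eq_bigr => M _.
rewrite big_mkcond big_fsetU1 //= -big_mkcond fsubUset.
by case: (x \in X) (A `<=` M) (X `\ x `<=` M) => [] [] [] /=; ring.
Qed.

Lemma cover_sum_fsetU1 w X P A : X \notin P ->
  cover_sum w (X |` P) A =
  cover_sum w P A + (x \in X)%:R * (w X - 1) * cover_sum w P (A `|` X `\ x).
Proof.
move=> XNP; rewrite /cover_sum big_mkcond big_fpowersetU1 //= -big_mkcond.
congr (_ + _); rewrite mulr_sumr big_mkcond [RHS]big_mkcond /=.
rewrite big_seq [RHS]big_seq; apply: eq_bigr => XX; rewrite fpowersetE => sXXP.
have XNXX : X \notin XX by apply: contraNN XNP; apply: (fsubsetP sXXP).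
rewrite all_fsetU1 !(big_fsetU1 _ _ XNXX) /= fsetDUl fsetUA.
by case: (x \in X) (all _ _) (_ == N) => [] [] [] /=; ring.
Qed.

Lemma mobius_sum_eq0 w P A : ~~ (A `<=` N) -> mobius_sum w P A = 0.
Proof.
move=> nsAN; rewrite /mobius_sum big_seq big1 // => M; rewrite fpowersetE => sMN.
suff -> : (A `<=` M) = false by rewrite mul0r mulr0.
by apply: contraNF nsAN => /fsubset_trans; apply.
Qed.

Lemma cover_sum_eq0 w P A : ~~ (A `<=` N) -> cover_sum w P A = 0.
Proof.
move=> nsAN; rewrite /cover_sum big1 // => XX /andP[_ /eqP eN].
by move: nsAN; rewrite -eN fsubsetUl.
Qed.

Variables (a : T -> C) (w b : {fset T} -> C).
Hypothesis a_ge0 : forall s, 0 <= a s.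
Hypothesis b_ge_norm : forall X, `|w X| <= b X.
Hypothesis b_ge_sub : forall X S, S `<=` X `\ x -> S != fset0 ->
  `|w X - 1| * \prod_(s <- S) a s <= b X - 1.

Lemma mobius_sum_le_cover_sum P A :
  `|mobius_sum w P A| * \prod_(s <- N `\` A) a s <= cover_sum b P A.
Proof.
have prod_ge0 S : 0 <= \prod_(s <- S) a s by apply: prodr_ge0 => s _.
elim/fset1U_rect: P A => [|X P XNP IH] A.
  rewrite mobius_sum_fset0 cover_sum_fset0; case: eqP => [->|_].
    by rewrite fsetDv big_seq_fset0 normr1 mul1r.
  by rewrite normr0 mul0r.
rewrite mobius_sum_fsetU1 // cover_sum_fsetU1 //.
have [xX|_] := boolP (x \in X); last by rewrite !mul0r !addr0.
rewrite !mul1r; have [sXA|nsXA] := boolP (X `\ x `<=` A).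
  have expand_once (u v : C) : u + (v - 1) * u = v * u.
    by rewrite mulrBl mul1r addrC subrK.
  rewrite (fsetUidPl _ _ sXA) !expand_once normrM -mulrA.
  by apply: ler_pM; rewrite ?mulr_ge0.
set A' := A `|` X `\ x.
have [sA'N|nsA'N] := boolP (A' `<=` N); last first.
  by rewrite (mobius_sum_eq0 _ _ _ nsA'N) (cover_sum_eq0 _ _ _ nsA'N) !mulr0 !addr0.
have sA'AX : A' `\` A `<=` X `\ x by rewrite fsetDUl fsetDv fset0U fsubsetDl.
have A'A_neq0 : A' `\` A != fset0 by rewrite fsetD_eq0 fsubUset fsubset_refl.
apply: le_trans (ler_wpM2r (prod_ge0 _) (ler_normD _ _)) _.
rewrite mulrDl; apply: lerD; first exact: IH.
rewrite (big_fsetD_split _ _ _ (fsubsetUl A (X `\ x)) sA'N) normrM.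
rewrite [X in _ * X]mulrC mulrACA.
by apply: ler_pM; rewrite ?mulr_ge0 ?b_ge_sub.
Qed.

End Expansion.

Arguments mobius_sum {C T} x N w P A.
Arguments cover_sum {C T} x N w P A.

Section KernelBound.
Variables (R : realType) (T : countType) (W : {fset T} -> R[i]) (r : T -> R).
Hypothesis hr : forall s, 0 <= r s < 1.
Variable x : T.

Lemma alphaC_ge0 s : 0 <= (alpha r s)%:C%C :> R[i].
Proof.
have /andP[r_ge0 r_lt1] := hr s.
by rewrite (lecR 0) divr_ge0 // subr_ge0 ltW.
Qed.

Lemma alphaSC (S : {fset T}) :
  (alphaS r S)%:C%C = \prod_(s <- S) (alpha r s)%:C%C.
Proof. exact: rmorph_prod. Qed.

Lemma bound_max_term_real X S : 1 + `|W X - 1| * (alphaS r S)%:C%C \is Num.real.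
Proof.
rewrite rpredD ?rpred1 ?rpredM ?normr_real // ger0_real // alphaSC.
by apply: prodr_ge0 => s _; apply: alphaC_ge0.
Qed.

Lemma bound_max_ge_norm X : `|W X| <= bound_max W r x X.
Proof.
pose term S := 1 + `|W X - 1| * (alphaS r S)%:C%C.
exact: (real_bigmax_ge_id (f := term) (normr_real _) (bound_max_term_real X)).
Qed.

Lemma bound_max_ge_sub X S : S `<=` X `\ x -> S != fset0 ->
  `|W X - 1| * \prod_(s <- S) (alpha r s)%:C%C <= bound_max W r x X - 1.
Proof.
move=> sSX S_neq0; rewrite lerBrDl -alphaSC /bound_max.
apply: (real_le_bigmax_seq (normr_real _) (bound_max_term_real X)) => //.
by rewrite fpowersetE.
Qed.

Lemma kappa_fset1 (B : {fset T}) : x \notin B ->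
  kappa W [fset x] B = \prod_(D <- fpowerset B) W (x |` D).
Proof.
move=> xNB; rewrite /kappa fpowerset1 big_mkcond big_fsetU1 ?inE /=; last first.
  by apply/eqP => /fsetP/(_ x); rewrite !inE eqxx.
rewrite mul1r big_seq_fset1 ifT; last by apply/fset0Pn; exists x; rewrite inE.
rewrite /Wcond ifT //; apply/eqP/fsetP => y; rewrite !inE.
by case: eqP => // ->; rewrite (negbTE xNB).
Qed.

Lemma gamma_mobius_sum N : x \notin N ->
  gamma W x N = mobius_sum x N W (fpowerset (x |` N)) fset0.
Proof.
move=> xNN; have xNsub E : E `<=` N -> x \notin E.
  by move=> sEN; apply: contraNN xNN; apply: (fsubsetP sEN).
rewrite /gamma /gammaB /mobius_sum big_seq [RHS]big_seq.
apply: eq_bigr => M; rewrite fpowersetE => sMN.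
rewrite fset0U fsub0set mul1r kappa_fset1 ?xNsub //; congr (_ * _).
rewrite [RHS]big_fset_condE.
have -> : [fset X in fpowerset (x |` N) | (x \in X) && (X `\ x `<=` M)] =
          [fset x |` D | D in fpowerset M].
  apply/fsetP => X; rewrite !inE /= fpowersetE; apply/idP/imfsetP => /=.
    by case/and3P=> _ xX sXM; exists (X `\ x); rewrite ?fsetD1K ?fpowersetE.
  move=> [D]; rewrite fpowersetE => sDM ->; have sDN := fsubset_trans sDM sMN.
  by rewrite fsetUS ?fset1U1 ?fsetU1K ?xNsub.
rewrite [RHS]big_imfset // => D D'; rewrite !fpowersetE => sDM sD'M eDD'.
have [sDN sD'N] := (fsubset_trans sDM sMN, fsubset_trans sD'M sMN).
by rewrite -(fsetU1K (xNsub _ sDN)) eDD' fsetU1K ?xNsub.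
Qed.

Lemma rhs_cover_sum N :
  rhs W r x N = cover_sum x N (bound_max W r x) (fpowerset (x |` N)) fset0.
Proof. by apply: eq_bigl => XX; rewrite fset0U. Qed.

End KernelBound.

Theorem lemma6p4 (R : realType) (T : countType)
  (W : {fset T} -> R[i]) (r : T -> R)
  (hr : forall s : T, 0 <= r s < 1)
  (x : T) (N : {fset T}) (hxN : x \notin N) :
  `|gamma W x N| * (alphaS r N)%:C%C <= rhs W r x N.
Proof.
rewrite gamma_mobius_sum // rhs_cover_sum alphaSC -[in X in _ * X <= _](fsetD0 N).
apply: mobius_sum_le_cover_sum => [s|X|X S]; first exact: alphaC_ge0.
  exact: bound_max_ge_norm.
exact: bound_max_ge_sub.
Qed.
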